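(* In the calculus $\lambda^{RE}$ described in the context: if $e_1\Rrightarrow e_2$, then for every constant $c$, $e_1\to^*c$ if and only if $e_2\to^*c$.
   Context: Syntax of $\lambda^{RE}$. Basic types $b ::= \mathsf{Bool}\mid\mathsf{Unit}$. Constants $c ::= \mathsf{true}\mid\mathsf{false}\mid\mathsf{unit}\mid (=_b)\mid (=_{(c,b)})$. Expressions $e ::= c\mid x\mid e\ e\mid \lambda x{:}\tau.\,e\mid \mathsf{BEq}_b\ e\ e\ e\mid \mathsf{XEq}_{x:\tau\to\tau}\ e\ e\ e$. Values $v ::= c\mid \lambda x{:}\tau.\,e\mid \mathsf{BEq}_b\ e\ e\ v\mid \mathsf{XEq}_{x:\tau\to\tau}\ e\ e\ v$. Types $\tau ::= \{x{:}b\mid e\}\mid x{:}\tau\to\tau\mid \mathsf{PEq}_{\tau}\{e\}\{e\}$. $e[x:=e']$ is capture-avoiding substitution. Reduction: evaluation contexts $E ::= \bullet\mid E\ e\mid v\ E\mid \mathsf{BEq}_b\ e\ e\ E\mid\mathsf{XEq}_{x:\tau\to\tau}\ e\ e\ E$; $E[e]\to E[e']$ if $e\to e'$; $(\lambda x{:}\tau.\,e)\ v\to e[x:=v]$; $(=_b)\ c_1\to(=_{(c_1,b)})$; $(=_{(c_1,b)})\ c_2\to\mathsf{true}$ if $c_1,c_2$ syntactically equal, else $\to\mathsf{false}$. $\to^*$ is the reflexive–transitive closure. Parallel reduction $e\Rrightarrow e'$ and $\tau\Rrightarrow\tau'$ is defined inductively: $x\Rrightarrow x$; $c\Rrightarrow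 c$; $\lambda x{:}\tau.e\Rrightarrow\lambda x{:}\tau'.e'$ if $\tau\Rrightarrow\tau'$, $e\Rrightarrow e'$; $e_1\ e_2\Rrightarrow e_1'\ e_2'$ if $e_i\Rrightarrow e_i'$; $(\lambda x{:}\tau.e)\ v\Rrightarrow e'[x:=v']$ if $e\Rrightarrow e'$ and $v\Rrightarrow v'$; $(=_b)\ c_1\Rrightarrow(=_{(c_1,b)})$; $(=_{(c_1,b)})\ c_2\Rrightarrow d$ where $d=\mathsf{true}$ if $c_1,c_2$ are syntactically equal and $d=\mathsf{false}$ otherwise; $\mathsf{BEq}_b\ e_l\ e_r\ e\Rrightarrow\mathsf{BEq}_b\ e_l'\ e_r'\ e'$ if $e_l\Rrightarrow e_l'$, $e_r\Rrightarrow e_r'$, $e\Rrightarrow e'$; $\mathsf{XEq}_{x:\tau_x\to\tau}\ e_l\ e_r\ e\Rrightarrow\mathsf{XEq}_{x:\tau_x'\to\tau'}\ e_l'\ e_r'\ e'$ if all five components parallel reduce; on types: $\{x{:}b\mid r\}\Rrightarrow\{x{:}b\mid r'\}$ if $r\Rrightarrow r'$; $x{:}\tau_x\to\tau\Rrightarrow x{:}\tau_x'\to\tau'$ if $\tau_x\Rrightarrow\tau_x'$, $\tau\Rrightarrow\tau'$; $\mathsf{PEq}_\tau\{e_l\}\{e_r\}\Rrightarrow\mathsf{PEq}_{\tau'}\{e_l'\}\{e_r'\}$ if all components parallel reduce. *)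

From Stdlib Require Import Arith Relations.

Inductive basic : Type := TBool | TUnit.

(* constants: true | false | unit | (=_b) | (=_(c,b)) *)
Inductive const : Type :=
  | CTrue | CFalse | CUnit
  | CEq (b : basic)
  | CEqC (c : const) (b : basic).

Definition basic_eq_dec : forall b1 b2 : basic, {b1 = b2} + {b1 <> b2}.
Proof. decide equality. Defined.

Definition const_eq_dec : forall c1 c2 : const, {c1 = c2} + {c1 <> c2}.
Proof. decide equality; apply basic_eq_dec. Defined.

(* Binders (de Bruijn):
   - ELam t e          : lambda x:t. e            (x bound in e)
   - EXEq tx t el er e : XEq_{x:tx -> t} el er e  (x bound in t)
   - TRefn b r         : {x:b | r}                (x bound in r)
   - TFun tx t         : x:tx -> t                (x bound in t) *)
Inductive expr : Type :=
  | EConst (c : const)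
  | EVar (n : nat)
  | EApp (e1 e2 : expr)
  | ELam (t : ty) (e : expr)
  | EBEq (b : basic) (el er e : expr)
  | EXEq (tx t : ty) (el er e : expr)
with ty : Type :=
  | TRefn (b : basic) (r : expr)
  | TFun (tx t : ty)
  | TPEq (t : ty) (el er : expr).

Fixpoint lift_e (d k : nat) (e : expr) : expr :=
  match e with
  | EConst c => EConst c
  | EVar n => if k <=? n then EVar (n + d) else EVar n
  | EApp e1 e2 => EApp (lift_e d k e1) (lift_e d k e2)
  | ELam t e => ELam (lift_t d k t) (lift_e d (S k) e)
  | EBEq b el er e => EBEq b (lift_e d k el) (lift_e d k er) (lift_e d k e)
  | EXEq tx t el er e =>
      EXEq (lift_t d k tx) (lift_t d (S k) t) (lift_e d k el) (lift_e d k er) (lift_e d k e)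
  end
with lift_t (d k : nat) (t : ty) : ty :=
  match t with
  | TRefn b r => TRefn b (lift_e d (S k) r)
  | TFun tx t => TFun (lift_t d k tx) (lift_t d (S k) t)
  | TPEq t el er => TPEq (lift_t d k t) (lift_e d k el) (lift_e d k er)
  end.

(* subst_e k v e : capture-avoiding substitution e[x_k := v] (the binder of
   index k is removed, so indices above k are decremented). *)
Fixpoint subst_e (k : nat) (v : expr) (e : expr) : expr :=
  match e with
  | EConst c => EConst c
  | EVar n =>
      if n =? k then lift_e k 0 v
      else if k <? n then EVar (pred n) else EVar n
  | EApp e1 e2 => EApp (subst_e k v e1) (subst_e k v e2)
  | ELam t e => ELam (subst_t k v t) (subst_e (S k) v e)
  | EBEq b el er e => EBEq b (subst_e k v el) (subst_e k v er) (subst_e k v e)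
  | EXEq tx t el er e =>
      EXEq (subst_t k v tx) (subst_t (S k) v t) (subst_e k v el) (subst_e k v er) (subst_e k v e)
  end
with subst_t (k : nat) (v : expr) (t : ty) : ty :=
  match t with
  | TRefn b r => TRefn b (subst_e (S k) v r)
  | TFun tx t => TFun (subst_t k v tx) (subst_t (S k) v t)
  | TPEq t el er => TPEq (subst_t k v t) (subst_e k v el) (subst_e k v er)
  end.

Definition subst0 (e v : expr) : expr := subst_e 0 v e.

Definition eq_result (c1 c2 : const) : const :=
  if const_eq_dec c1 c2 then CTrue else CFalse.

Inductive value : expr -> Prop :=
  | v_const c : value (EConst c)
  | v_lam t e : value (ELam t e)
  | v_beq b el er v : value v -> value (EBEq b el er v)
  | v_xeq tx t el er v : value v -> value (EXEq tx t el er v).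

(* small-step reduction, with evaluation contexts inlined *)
Inductive step : expr -> expr -> Prop :=
  | st_app_l e1 e1' e2 : step e1 e1' -> step (EApp e1 e2) (EApp e1' e2)
  | st_app_r v e2 e2' : value v -> step e2 e2' -> step (EApp v e2) (EApp v e2')
  | st_beq b el er e e' : step e e' -> step (EBEq b el er e) (EBEq b el er e')
  | st_xeq tx t el er e e' : step e e' -> step (EXEq tx t el er e) (EXEq tx t el er e')
  | st_beta t e v : value v -> step (EApp (ELam t e) v) (subst0 e v)
  | st_eq1 b c1 : step (EApp (EConst (CEq b)) (EConst c1)) (EConst (CEqC c1 b))
  | st_eq2 c1 b c2 :
      step (EApp (EConst (CEqC c1 b)) (EConst c2)) (EConst (eq_result c1 c2)).

Definition steps : expr -> expr -> Prop := clos_refl_trans expr step.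

Inductive par_e : expr -> expr -> Prop :=
  | pe_var x : par_e (EVar x) (EVar x)
  | pe_const c : par_e (EConst c) (EConst c)
  | pe_lam t t' e e' : par_t t t' -> par_e e e' -> par_e (ELam t e) (ELam t' e')
  | pe_app e1 e1' e2 e2' : par_e e1 e1' -> par_e e2 e2' -> par_e (EApp e1 e2) (EApp e1' e2')
  | pe_beta t e e' v v' : value v -> par_e e e' -> par_e v v' ->
      par_e (EApp (ELam t e) v) (subst0 e' v')
  | pe_eq1 b c1 : par_e (EApp (EConst (CEq b)) (EConst c1)) (EConst (CEqC c1 b))
  | pe_eq2 c1 b c2 :
      par_e (EApp (EConst (CEqC c1 b)) (EConst c2)) (EConst (eq_result c1 c2))
  | pe_beq b el el' er er' e e' : par_e el el' -> par_e er er' -> par_e e e' ->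
      par_e (EBEq b el er e) (EBEq b el' er' e')
  | pe_xeq tx tx' t t' el el' er er' e e' :
      par_t tx tx' -> par_t t t' -> par_e el el' -> par_e er er' -> par_e e e' ->
      par_e (EXEq tx t el er e) (EXEq tx' t' el' er' e')
with par_t : ty -> ty -> Prop :=
  | pt_refn b r r' : par_e r r' -> par_t (TRefn b r) (TRefn b r')
  | pt_fun tx tx' t t' : par_t tx tx' -> par_t t t' -> par_t (TFun tx t) (TFun tx' t')
  | pt_peq t t' el el' er er' : par_t t t' -> par_e el el' -> par_e er er' ->
      par_t (TPEq t el er) (TPEq t' el' er').

(* Plotkin's call-by-value standardization argument. Forwards, an evaluation
   step e1 -> e1' is matched from any parallel reduct e2 of e1 by finitely many
   steps, landing on a parallel reduct of e1'. Backwards, a parallel reduction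
   followed by a step can be reorganised as evaluation steps followed by a
   parallel reduction (postponement). The induction for postponement is on the
   weight of a parallel-reduction derivation, where contracting a redex
   (lambda x. e) v => e'[x := v'] costs 1 + |e => e'| + #x(e') * |v => v'|, with
   #x(e') the number of free occurrences of x in e': firing that redex leaves
   the derivation e[x := v] => e'[x := v'] of strictly smaller weight. Since
   the only value that parallel-reduces to a constant is that constant, both
   directions transfer e ->* c. *)

From Stdlib Require Import Lia Arith Relations.

Scheme expr_mut := Induction for expr Sort Prop with ty_mut := Induction for ty Sort Prop.
Combined Scheme expr_ty_mut from expr_mut, ty_mut.

Fixpoint occ_e (k : nat) (e : expr) : nat :=
  match e with
  | EConst _ => 0
  | EVar n => if n =? k then 1 else 0
  | EApp e1 e2 => occ_e k e1 + occ_e k e2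
  | ELam t e => occ_t k t + occ_e (S k) e
  | EBEq _ el er e => occ_e k el + occ_e k er + occ_e k e
  | EXEq tx t el er e => occ_t k tx + occ_t (S k) t + occ_e k el + occ_e k er + occ_e k e
  end
with occ_t (k : nat) (t : ty) : nat :=
  match t with
  | TRefn _ r => occ_e (S k) r
  | TFun tx t => occ_t k tx + occ_t (S k) t
  | TPEq t el er => occ_t k t + occ_e k el + occ_e k er
  end.

Ltac index_cases :=
  repeat (cbn [lift_e lift_t subst_e subst_t occ_e occ_t pred]; match goal with
   | |- context [?a <=? ?b] => destruct (Nat.leb_spec a b)
   | |- context [?a =? ?b] => destruct (Nat.eqb_spec a b)
   | |- context [?a <? ?b] => destruct (Nat.ltb_spec a b)
   end); try lia; try (f_equal; lia).

Ltac congr_ih :=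
  simpl; f_equal; match goal with IH : forall _, _ |- _ => apply IH; lia end.

Lemma lift_lift_comm :
  (forall e d i j l m, l <= i -> m = i + j ->
     lift_e d m (lift_e j l e) = lift_e j l (lift_e d i e)) /\
  (forall t d i j l m, l <= i -> m = i + j ->
     lift_t d m (lift_t j l t) = lift_t j l (lift_t d i t)).
Proof. apply expr_ty_mut; intros; try congr_ih; index_cases. Qed.

Lemma lift_lift_fuse :
  (forall e i j k l m, l <= j -> j <= l + k -> m = i + k ->
     lift_e i j (lift_e k l e) = lift_e m l e) /\
  (forall t i j k l m, l <= j -> j <= l + k -> m = i + k ->
     lift_t i j (lift_t k l t) = lift_t m l t).
Proof. apply expr_ty_mut; intros; try congr_ih; index_cases. Qed.

Lemma lift_subst_comm :
  (forall e d j k v m, m = j + k ->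
     lift_e d m (subst_e j v e) = subst_e j (lift_e d k v) (lift_e d (S m) e)) /\
  (forall t d j k v m, m = j + k ->
     lift_t d m (subst_t j v t) = subst_t j (lift_e d k v) (lift_t d (S m) t)).
Proof.
  apply expr_ty_mut; intros; try congr_ih.
  index_cases; subst; apply (proj1 lift_lift_comm); lia.
Qed.

Lemma subst_lift_cancel :
  (forall e i u d j, j <= i -> i <= j + d ->
     subst_e i u (lift_e (S d) j e) = lift_e d j e) /\
  (forall t i u d j, j <= i -> i <= j + d ->
     subst_t i u (lift_t (S d) j t) = lift_t d j t).
Proof. apply expr_ty_mut; intros; try congr_ih; index_cases. Qed.

Lemma subst_lift_comm :
  (forall e m k i j v, j <= k -> m = k + i ->
     subst_e m v (lift_e i j e) = lift_e i j (subst_e k v e)) /\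
  (forall t m k i j v, j <= k -> m = k + i ->
     subst_t m v (lift_t i j t) = lift_t i j (subst_t k v t)).
Proof.
  apply expr_ty_mut; intros; try congr_ih.
  index_cases; subst; symmetry; apply (proj1 lift_lift_fuse); lia.
Qed.

Lemma subst_subst_comm :
  (forall e i k v w m, m = i + k ->
     subst_e m v (subst_e i w e) = subst_e i (subst_e k v w) (subst_e (S m) v e)) /\
  (forall t i k v w m, m = i + k ->
     subst_t m v (subst_t i w t) = subst_t i (subst_e k v w) (subst_t (S m) v t)).
Proof.
  apply expr_ty_mut; intros; try congr_ih.
  index_cases; subst.
  - apply (proj1 subst_lift_comm); lia.
  - symmetry; apply (proj1 subst_lift_cancel); lia.
Qed.

Ltac rewrite_ih_lia :=
  simpl; repeat match goal with IH : forall _, _ |- _ => erewrite IH by lia; clear IH end; lia.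

Lemma occ_lift_below :
  (forall e x d k, x < k -> occ_e x (lift_e d k e) = occ_e x e) /\
  (forall t x d k, x < k -> occ_t x (lift_t d k t) = occ_t x t).
Proof. apply expr_ty_mut; intros; try rewrite_ih_lia; index_cases. Qed.

Lemma occ_lift_gap :
  (forall e x d k, k <= x -> x < k + d -> occ_e x (lift_e d k e) = 0) /\
  (forall t x d k, k <= x -> x < k + d -> occ_t x (lift_t d k t) = 0).
Proof. apply expr_ty_mut; intros; try rewrite_ih_lia; index_cases. Qed.

Lemma occ_lift_above :
  (forall e x d k, k <= x -> occ_e (x + d) (lift_e d k e) = occ_e x e) /\
  (forall t x d k, k <= x -> occ_t (x + d) (lift_t d k t) = occ_t x t).
Proof.
  apply expr_ty_mut; intros; simpl; index_cases;
    repeat match goal with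
    | IH : forall (x : nat), _ |- _ => first [rewrite IH by lia | rewrite (IH (S x) d) by lia]; clear IH
    end; reflexivity.
Qed.

Lemma occ_subst_below :
  (forall e x i v, x < i -> occ_e x (subst_e i v e) = occ_e x e) /\
  (forall t x i v, x < i -> occ_t x (subst_t i v t) = occ_t x t).
Proof.
  apply expr_ty_mut; intros; try rewrite_ih_lia.
  index_cases; subst; apply (proj1 occ_lift_gap); lia.
Qed.

Lemma occ_subst :
  (forall e i k w, occ_e (i + k) (subst_e i w e) = occ_e (S (i + k)) e + occ_e i e * occ_e k w) /\
  (forall t i k w, occ_t (i + k) (subst_t i w t) = occ_t (S (i + k)) t + occ_t i t * occ_e k w).
Proof.
  apply expr_ty_mut; intros; simpl; index_cases;
    repeat match goal with
    | IH : forall (i : nat), _ |- _ => first [rewrite IH | rewrite (IH (S i) k)]; clear IH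
    end; simpl; try lia.
  subst. rewrite Nat.add_comm, (proj1 occ_lift_above) by lia. lia.
Qed.

Lemma value_lift : forall v, value v -> forall d k, value (lift_e d k v).
Proof. induction 1; intros; simpl; constructor; auto. Qed.

Lemma value_subst : forall v, value v -> forall k u, value (subst_e k u v).
Proof. induction 1; intros; simpl; constructor; auto. Qed.

Inductive wpar_e : nat -> expr -> expr -> Prop :=
  | wpe_var x : wpar_e 0 (EVar x) (EVar x)
  | wpe_const c : wpar_e 0 (EConst c) (EConst c)
  | wpe_lam m n t t' e e' :
      wpar_t m t t' -> wpar_e n e e' -> wpar_e (m + n) (ELam t e) (ELam t' e')
  | wpe_app m n e1 e1' e2 e2' :
      wpar_e m e1 e1' -> wpar_e n e2 e2' -> wpar_e (m + n) (EApp e1 e2) (EApp e1' e2')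
  | wpe_beta m n t e e' v v' : value v -> wpar_e m e e' -> wpar_e n v v' ->
      wpar_e (m + occ_e 0 e' * n + 1) (EApp (ELam t e) v) (subst0 e' v')
  | wpe_eq1 b c1 : wpar_e 0 (EApp (EConst (CEq b)) (EConst c1)) (EConst (CEqC c1 b))
  | wpe_eq2 c1 b c2 :
      wpar_e 0 (EApp (EConst (CEqC c1 b)) (EConst c2)) (EConst (eq_result c1 c2))
  | wpe_beq m1 m2 m3 b el el' er er' e e' :
      wpar_e m1 el el' -> wpar_e m2 er er' -> wpar_e m3 e e' ->
      wpar_e (m1 + m2 + m3) (EBEq b el er e) (EBEq b el' er' e')
  | wpe_xeq m1 m2 m3 m4 m5 tx tx' t t' el el' er er' e e' :
      wpar_t m1 tx tx' -> wpar_t m2 t t' -> wpar_e m3 el el' -> wpar_e m4 er er' ->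
      wpar_e m5 e e' ->
      wpar_e (m1 + m2 + m3 + m4 + m5) (EXEq tx t el er e) (EXEq tx' t' el' er' e')
with wpar_t : nat -> ty -> ty -> Prop :=
  | wpt_refn m b r r' : wpar_e m r r' -> wpar_t m (TRefn b r) (TRefn b r')
  | wpt_fun m n tx tx' t t' :
      wpar_t m tx tx' -> wpar_t n t t' -> wpar_t (m + n) (TFun tx t) (TFun tx' t')
  | wpt_peq m1 m2 m3 t t' el el' er er' :
      wpar_t m1 t t' -> wpar_e m2 el el' -> wpar_e m3 er er' ->
      wpar_t (m1 + m2 + m3) (TPEq t el er) (TPEq t' el' er').

Scheme wpar_e_mut := Induction for wpar_e Sort Prop
  with wpar_t_mut := Induction for wpar_t Sort Prop.
Combined Scheme wpar_mut from wpar_e_mut, wpar_t_mut.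
Scheme par_e_mut := Induction for par_e Sort Prop
  with par_t_mut := Induction for par_t Sort Prop.
Combined Scheme par_mut from par_e_mut, par_t_mut.

Lemma wpar_par :
  (forall m e e', wpar_e m e e' -> par_e e e') /\
  (forall m t t', wpar_t m t t' -> par_t t t').
Proof. apply wpar_mut; intros; econstructor; eauto. Qed.

Lemma par_wpar :
  (forall e e', par_e e e' -> exists m, wpar_e m e e') /\
  (forall t t', par_t t t' -> exists m, wpar_t m t t').
Proof.
  apply par_mut; intros;
    repeat match goal with H : exists _, _ |- _ => destruct H end;
    eexists; econstructor; eauto.
Qed.

Lemma wpar_lift :
  (forall m e e', wpar_e m e e' -> forall d k, wpar_e m (lift_e d k e) (lift_e d k e')) /\
  (forall m t t', wpar_t m t t' -> forall d k, wpar_t m (lift_t d k t) (lift_t d k t')).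
Proof.
  apply wpar_mut; intros; simpl; try (constructor; auto; fail).
  - destruct (k <=? x); constructor.
  - unfold subst0. rewrite (proj1 lift_subst_comm e' d 0 k v' k) by lia.
    rewrite <- (proj1 occ_lift_below e' 0 d (S k)) by lia.
    constructor; auto using value_lift.
Qed.

(* Constructor weights are sums that only match the target weight up to
   arithmetic: apply the constructor at an evar weight, then prove equality. *)
Ltac wpar_reweigh :=
  match goal with |- ?W ?m _ _ =>
    let w := fresh "w" in evar (w : nat); replace m with w; subst w;
    [econstructor; eauto | simpl; nia] end.

Lemma wpar_subst :
  (forall m e e', wpar_e m e e' -> forall k n v v', wpar_e n v v' ->
     wpar_e (m + occ_e k e' * n) (subst_e k v e) (subst_e k v' e')) /\
  (forall m t t', wpar_t m t t' -> forall k n v v', wpar_e n v v' ->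
     wpar_t (m + occ_t k t' * n) (subst_t k v t) (subst_t k v' t')).
Proof.
  apply wpar_mut; try (intros; simpl; wpar_reweigh; fail).
  - intros x k n v v' Hv; simpl.
    destruct (Nat.eqb_spec x k); simpl.
    + rewrite Nat.add_0_r. apply (proj1 wpar_lift); auto.
    + destruct (k <? x); constructor.
  - intros m n t e e' v v' Hv _ IHe _ IHv k n' u u' Hu; unfold subst0; simpl.
    rewrite (proj1 subst_subst_comm e' 0 k u' v' k) by lia.
    pose proof (proj1 occ_subst e' 0 k v') as Hocc; simpl in Hocc; rewrite Hocc.
    replace (m + occ_e 0 e' * n + 1 + (occ_e (S k) e' + occ_e 0 e' * occ_e k v') * n')
      with ((m + occ_e (S k) e' * n') + occ_e 0 (subst_e (S k) u' e') * (n + occ_e k v' * n') + 1)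
      by (rewrite (proj1 occ_subst_below) by lia; nia).
    constructor; auto using value_subst.
Qed.

Lemma par_subst0 : forall e e' v v', par_e e e' -> par_e v v' ->
  par_e (subst0 e v) (subst0 e' v').
Proof.
  intros e e' v v' He Hv.
  destruct (proj1 par_wpar _ _ He) as [m Hm], (proj1 par_wpar _ _ Hv) as [n Hn].
  exact (proj1 wpar_par _ _ _ (proj1 wpar_subst _ _ _ Hm 0 _ _ _ Hn)).
Qed.

Lemma value_no_step : forall v, value v -> forall e, ~ step v e.
Proof. induction 1; intros e0 Hs; inversion Hs; subst; eapply IHvalue; eauto. Qed.

Lemma value_par : forall v, value v -> forall v', par_e v v' -> value v'.
Proof. induction 1; intros v0 Hp; inversion Hp; subst; constructor; auto. Qed.

Lemma value_par_const : forall v c, value v -> par_e v (EConst c) -> v = EConst c.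
Proof. intros v c Hv Hp; inversion Hp; subst; auto; inversion Hv. Qed.

Lemma value_par_lam : forall v t e, value v -> par_e v (ELam t e) ->
  exists t0 e0, v = ELam t0 e0 /\ par_e e0 e.
Proof. intros v t e Hv Hp; inversion Hp; subst; eauto; inversion Hv. Qed.

Lemma steps_congr (F : expr -> expr) :
  (forall a b, step a b -> step (F a) (F b)) -> forall a b, steps a b -> steps (F a) (F b).
Proof. intros HF; induction 1; [apply rt_step; auto | apply rt_refl | eapply rt_trans; eauto]. Qed.

Lemma steps_app_l a a' b : steps a a' -> steps (EApp a b) (EApp a' b).
Proof. apply (steps_congr (fun x => EApp x b)); constructor; auto. Qed.

Lemma steps_app_r v b b' : value v -> steps b b' -> steps (EApp v b) (EApp v b').
Proof. intro Hv; apply (steps_congr (EApp v)); constructor; auto. Qed.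

Lemma steps_beq bt el er a a' : steps a a' -> steps (EBEq bt el er a) (EBEq bt el er a').
Proof. apply (steps_congr (EBEq bt el er)); constructor; auto. Qed.

Lemma steps_xeq tx t el er a a' : steps a a' -> steps (EXEq tx t el er a) (EXEq tx t el er a').
Proof. apply (steps_congr (EXEq tx t el er)); constructor; auto. Qed.

Lemma wpar_value_postpone : forall N m a a', wpar_e m a a' -> m < N -> value a' ->
  exists a'', steps a a'' /\ value a'' /\ par_e a'' a'.
Proof.
  induction N as [|N IHN]; intros m a a' H Hm Hv; [lia|].
  induction H; try solve [inversion Hv].
  - exists (EConst c); repeat split; [apply rt_refl | constructor | constructor].
  - exists (ELam t e); repeat split; [apply rt_refl | constructor |].
    constructor; [eapply (proj2 wpar_par) | eapply (proj1 wpar_par)]; eauto.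
  - pose proof (proj1 wpar_subst _ _ _ H0 0 _ _ _ H1) as Hsub.
    destruct (IHN _ _ _ Hsub ltac:(lia) Hv) as [a'' [? [? ?]]].
    exists a''; repeat split; auto.
    apply rt_trans with (subst0 e v); [apply rt_step; constructor |]; auto.
  - exists (EConst (CEqC c1 b)); repeat split; [apply rt_step | |]; constructor.
  - exists (EConst (eq_result c1 c2)); repeat split; [apply rt_step | |]; constructor.
  - inversion Hv; subst.
    destruct IHwpar_e3 as [a'' [? [? ?]]]; auto; [lia |].
    exists (EBEq b el er a''); repeat split; [apply steps_beq | constructor |]; auto.
    constructor; auto; eapply (proj1 wpar_par); eauto.
  - inversion Hv; subst.
    destruct IHwpar_e3 as [a'' [? [? ?]]]; auto; [lia |].
    exists (EXEq tx t el er a''); repeat split; [apply steps_xeq | constructor |]; auto.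
    constructor; auto; first [eapply (proj1 wpar_par) | eapply (proj2 wpar_par)]; eauto.
Qed.

Lemma par_value_postpone a a' : par_e a a' -> value a' ->
  exists a'', steps a a'' /\ value a'' /\ par_e a'' a'.
Proof.
  intros Hp; destruct (proj1 par_wpar _ _ Hp) as [m Hm].
  eapply (wpar_value_postpone (S m)); eauto.
Qed.

Lemma par_app_redex a a' b b' e : par_e a a' -> par_e b b' -> value a' -> value b' ->
  step (EApp a' b') e -> exists e'', steps (EApp a b) e'' /\ par_e e'' e.
Proof.
  intros Ha Hb Hva Hvb Hs.
  destruct (par_value_postpone _ _ Ha Hva) as [a0 [Hsa [Hva0 Hpa]]].
  destruct (par_value_postpone _ _ Hb Hvb) as [b0 [Hsb [Hvb0 Hpb]]].
  assert (Hsab : steps (EApp a b) (EApp a0 b0))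
    by (eapply rt_trans; [apply steps_app_l | apply steps_app_r]; eauto).
  inversion Hs; subst; try solve [exfalso; eapply value_no_step; [| eassumption]; assumption].
  - destruct (value_par_lam _ _ _ Hva0 Hpa) as [t0 [body [-> Hbody]]].
    exists (subst0 body b0); split; [|apply par_subst0; auto].
    eapply rt_trans; [exact Hsab | apply rt_step; constructor; auto].
  - rewrite (value_par_const _ _ Hva0 Hpa), (value_par_const _ _ Hvb0 Hpb) in Hsab.
    eexists; split; [|constructor].
    eapply rt_trans; [exact Hsab | apply rt_step; constructor].
  - rewrite (value_par_const _ _ Hva0 Hpa), (value_par_const _ _ Hvb0 Hpb) in Hsab.
    eexists; split; [|constructor].
    eapply rt_trans; [exact Hsab | apply rt_step; constructor].
Qed.

Lemma wpar_step_postpone : forall N m e1 e2, wpar_e m e1 e2 -> m < N ->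
  forall e3, step e2 e3 -> exists e4, steps e1 e4 /\ par_e e4 e3.
Proof.
  induction N as [|N IHN]; intros m e1 e2 H Hm; [lia|].
  induction H; intros e3 Hs; try solve [inversion Hs].
  - pose proof (proj1 wpar_par _ _ _ H) as Hp1.
    pose proof (proj1 wpar_par _ _ _ H0) as Hp2.
    inversion Hs; subst; try solve [eapply par_app_redex; eauto; constructor].
    + destruct (IHwpar_e1 ltac:(lia) _ ltac:(eassumption)) as [e4 [? ?]].
      exists (EApp e4 e2); split; [apply steps_app_l | constructor]; auto.
    + destruct (par_value_postpone _ _ Hp1 ltac:(eassumption)) as [a0 [? [? ?]]].
      destruct (IHwpar_e2 ltac:(lia) _ ltac:(eassumption)) as [e4 [? ?]].
      exists (EApp a0 e4); split; [|constructor; auto].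
      eapply rt_trans; [apply steps_app_l | apply steps_app_r]; eauto.
  - pose proof (proj1 wpar_subst _ _ _ H0 0 _ _ _ H1) as Hsub.
    destruct (IHN _ _ _ Hsub ltac:(lia) _ Hs) as [e4 [? ?]].
    exists e4; split; auto.
    apply rt_trans with (subst0 e v); [apply rt_step; constructor |]; auto.
  - inversion Hs; subst.
    destruct (IHwpar_e3 ltac:(lia) _ ltac:(eassumption)) as [e4 [? ?]].
    exists (EBEq b el er e4); split; [apply steps_beq; auto |].
    constructor; auto; eapply (proj1 wpar_par); eauto.
  - inversion Hs; subst.
    destruct (IHwpar_e3 ltac:(lia) _ ltac:(eassumption)) as [e4 [? ?]].
    exists (EXEq tx t el er e4); split; [apply steps_xeq; auto |].
    constructor; auto; first [eapply (proj1 wpar_par) | eapply (proj2 wpar_par)]; eauto.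
Qed.

Lemma par_step_postpone e1 e2 e3 : par_e e1 e2 -> step e2 e3 ->
  exists e4, steps e1 e4 /\ par_e e4 e3.
Proof.
  intros Hp; destruct (proj1 par_wpar _ _ Hp) as [m Hm].
  eapply (wpar_step_postpone (S m)); eauto.
Qed.

Lemma par_step_simulation : forall e1 e1', step e1 e1' ->
  forall e2, par_e e1 e2 -> exists e2', steps e2 e2' /\ par_e e1' e2'.
Proof.
  induction 1 as [a a' b Ha IH | v b b' Hv Hb IH | bt el er a a' Ha IH
                 | tx t el er a a' Ha IH | t a v Hv | bt c1 | c1 bt c2];
    intros e2 Hp; inversion Hp; subst;
    try solve [exfalso; eapply value_no_step; [| eassumption]; constructor || assumption].
  - destruct (IH _ ltac:(eassumption)) as [x [? ?]].
    eexists; split; [apply steps_app_l; eauto | constructor; eauto].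
  - destruct (IH _ ltac:(eassumption)) as [x [? ?]].
    eexists; split; [apply steps_app_r; eauto using value_par | constructor; eauto].
  - destruct (IH _ ltac:(eassumption)) as [x [? ?]].
    eexists; split; [apply steps_beq; eauto | constructor; eauto].
  - destruct (IH _ ltac:(eassumption)) as [x [? ?]].
    eexists; split; [apply steps_xeq; eauto | constructor; eauto].
  - match goal with H : par_e (ELam _ _) _ |- _ => inversion H; subst end.
    eexists; split; [apply rt_step; constructor; eauto using value_par | apply par_subst0; auto].
  - eexists; split; [apply rt_refl | apply par_subst0; auto].
  - repeat match goal with H : par_e (EConst _) _ |- _ => inversion H; subst; clear H end.
    eexists; split; [apply rt_step; constructor | constructor].
  - eexists; split; [apply rt_refl | constructor].
  - repeat match goal with H : par_e (EConst _) _ |- _ => inversion H; subst; clear H end.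
    eexists; split; [apply rt_step; constructor | constructor].
  - eexists; split; [apply rt_refl | constructor].
Qed.

Lemma par_steps_const e1 e2 c : par_e e1 e2 -> steps e1 (EConst c) -> steps e2 (EConst c).
Proof.
  intros Hp Hs; apply clos_rt_rt1n in Hs; remember (EConst c) as ec eqn:Hc.
  revert e2 Hp; induction Hs as [e1 | e1 e1' e3 Hstep _ IH]; intros e2 Hp.
  - subst; inversion Hp; apply rt_refl.
  - destruct (par_step_simulation _ _ Hstep _ Hp) as [e2' [He2 Hpar]].
    eapply rt_trans; [exact He2 | apply IH; assumption].
Qed.

Lemma par_steps_const_rev e1 e2 c : par_e e1 e2 -> steps e2 (EConst c) -> steps e1 (EConst c).
Proof.
  intros Hp Hs; apply clos_rt_rt1n in Hs; remember (EConst c) as ec eqn:Hc.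
  revert e1 Hp; induction Hs as [e2 | e2 e2' e3 Hstep _ IH]; intros e1 Hp.
  - subst; destruct (par_value_postpone _ _ Hp (v_const c)) as [a [Hsa [Hva Hpa]]].
    rewrite (value_par_const _ _ Hva Hpa) in Hsa; exact Hsa.
  - destruct (par_step_postpone _ _ _ Hp Hstep) as [e4 [He4 Hpar]].
    eapply rt_trans; [exact He4 | apply IH; assumption].
Qed.

Theorem theoremC16 : forall e1 e2 : expr, par_e e1 e2 ->
  forall c : const, steps e1 (EConst c) <-> steps e2 (EConst c).
Proof.
  intros e1 e2 Hp c; split; [apply par_steps_const | apply par_steps_const_rev]; exact Hp.
Qed.
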